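(* Let $(G=(V,E),k,p)$ be an instance of Max $(k,n-k)$-Cut, write $V=\{v_1,\dots,v_{|V|}\}$, and let $\mathcal{F}$ be a $(|V|,k+p)$-universal set. For each $f\in\mathcal{F}$ let $G_f$ be a copy of $G$ in which the copy of $v_i$ is colored red if $f(i)=0$ and blue if $f(i)=1$. Then $(G,k,p)$ is a yes-instance of Max $(k,n-k)$-Cut if and only if at least one of the instances $(G_f,k,p)$, $f\in\mathcal{F}$, is a yes-instance of NC-Max $(k,n-k)$-Cut.
   Context: Graphs are finite, simple and undirected; $E(X,V\setminus X)$ denotes the set of edges with exactly one endpoint in $X$. Max $(k,n-k)$-Cut: given $G=(V,E)$ and positive integers $k,p$, decide whether there is $X\subseteq V$ with $|X|=k$ and $|E(X,V\setminus X)|\ge p$. NC-Max $(k,n-k)$-Cut: given a graph $G=(V,E)$ each of whose nodes is colored red or blue, and positive integers $k,p$, decide whether there is $X\subseteq V$ consisting of exactly $k$ red nodes and no blue nodes such that at least $p$ edges of $E(X,V\setminus X)$ have a blue endpoint. A set $\mathcal{F}$ of functions $\{1,\dots,n\}\to\{0,1\}$ is an $(n,t)$-universal set if for every $I\subseteq\{1,\dots,n\}$ with $|I|\le t$ and every $f':I\to\{0,1\}$ there is $f\in\mathcal{F}$ with $f(i)=f'(i)$ for all $i\in I$. *)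

From mathcomp Require Import all_boot.
Set Implicit Arguments. Unset Strict Implicit. Unset Printing Implicit Defensive.

(* A finite simple graph on vertex set 'I_n (v_{i+1} <-> i) given by a
   symmetric irreflexive adjacency relation. *)
Definition simple_graph (n : nat) (e : rel 'I_n) : Prop :=
  symmetric e /\ irreflexive e.

(* E(X, V\X) : edges with exactly one endpoint in X; each such edge is
   represented uniquely by the ordered pair (x, y) with x in X, y notin X. *)
Definition cut_edges n (e : rel 'I_n) (X : {set 'I_n}) : {set 'I_n * 'I_n} :=
  [set xy | [&& xy.1 \in X, xy.2 \notin X & e xy.1 xy.2]].

Definition maxcut_yes n (e : rel 'I_n) (k p : nat) : Prop :=
  exists X : {set 'I_n}, #|X| = k /\ p <= #|cut_edges e X|.

(* Colouring: blue c = true means blue, false means red. *)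
Definition nc_maxcut_yes n (e : rel 'I_n) (blue : 'I_n -> bool) (k p : nat) : Prop :=
  exists X : {set 'I_n},
    [/\ #|X| = k, (forall x, x \in X -> ~~ blue x) &
      p <= #|[set xy in cut_edges e X | blue xy.1 || blue xy.2]| ].

(* (n,t)-universal set of functions {1..n} -> {0,1}, encoded as 'I_n -> bool
   (false = 0, true = 1). *)
Definition universal_set n t (F : seq {ffun 'I_n -> bool}) : Prop :=
  forall (I : {set 'I_n}) (f' : 'I_n -> bool), #|I| <= t ->
    exists2 f, f \in F & forall i, i \in I -> f i = f' i.

From mathcomp Require Import all_boot.

(* A large cut (X, C) with #|X| = k and p chosen cut edges C involves at most
   k + p vertices: X and the outer endpoints of C.  A universal set contains a
   colouring making X red and these endpoints blue, and for it every edge of C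
   counts in the NC objective.  Conversely an NC solution is a cut solution. *)

Set Implicit Arguments.
Unset Strict Implicit.
Unset Printing Implicit Defensive.

Lemma subset_card_geq (T : finType) (A : {set T}) m :
  m <= #|A| -> exists2 B : {set T}, B \subset A & #|B| = m.
Proof.
case/card_geqP=> s [uniq_s size_s sub_s].
exists [set x in s]; first by apply/subsetP=> x; rewrite inE; apply: sub_s.
by rewrite cardsE (card_uniqP uniq_s).
Qed.

Lemma leq_card_setU_imset (aT rT : finType) (f : aT -> rT) (X : {set rT})
    (C : {set aT}) :
  #|X :|: f @: C| <= #|X| + #|C|.
Proof. by rewrite (leq_trans (leq_card_setU _ _)) // leq_add2l leq_imset_card. Qed.

Section NCMaxCut.

Variables (n : nat) (e : rel 'I_n).

Lemma maxcut_yes_of_nc (blue : 'I_n -> bool) k p :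
  nc_maxcut_yes e blue k p -> maxcut_yes e k p.
Proof.
case=> X [cardX _ le_p]; exists X; split=> //.
by apply: leq_trans le_p _; apply/subset_leq_card/subsetP=> xy; rewrite inE => /andP[].
Qed.

Lemma maxcut_yesP k p :
  maxcut_yes e k p <->
  exists X : {set 'I_n}, exists2 C : {set 'I_n * 'I_n},
    C \subset cut_edges e X & #|X| = k /\ #|C| = p.
Proof.
split=> [[X [cardX le_p]] | [X [C subC [cardX cardC]]]].
  by have [C subC cardC] := subset_card_geq le_p; exists X, C.
by exists X; split; rewrite // -cardC subset_leq_card.
Qed.

Lemma nc_maxcut_yes_of_cut (blue : 'I_n -> bool) (X : {set 'I_n})
    (C : {set 'I_n * 'I_n}) :
  C \subset cut_edges e X ->
  (forall x, x \in X -> ~~ blue x) -> (forall xy, xy \in C -> blue xy.2) ->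
  nc_maxcut_yes e blue #|X| #|C|.
Proof.
move=> subC redX blueC; exists X; split=> //.
apply/subset_leq_card/subsetP=> xy xyC.
by rewrite inE (subsetP subC) ?blueC ?orbT.
Qed.

End NCMaxCut.

Theorem lemma7 (n : nat) (e : rel 'I_n) (k p : nat)
    (F : seq {ffun 'I_n -> bool}) :
  simple_graph e -> 0 < k -> 0 < p ->
  universal_set (k + p) F ->
  (maxcut_yes e k p <->
   exists2 f, f \in F & nc_maxcut_yes e (fun i => f i) k p).
Proof.
move=> _ _ _ univF; split=> [|[f _]]; last exact: maxcut_yes_of_nc.
case/maxcut_yesP=> X [C subC [cardX cardC]].
have small : #|X :|: [set xy.2 | xy in C]| <= k + p.
  by rewrite -cardX -cardC leq_card_setU_imset.
have [f fF agree] := univF _ (fun i => i \notin X) small.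
exists f => //; rewrite -cardX -cardC.
apply: nc_maxcut_yes_of_cut => // [x xX | xy xyC].
  by rewrite agree ?inE ?xX ?negbK.
move: (subsetP subC _ xyC); rewrite inE => /and3P[_ yX _].
by rewrite agree // inE (imset_f (fun xy : 'I_n * 'I_n => xy.2) xyC) orbT.
Qed.
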